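(* For an integer $d\geqslant 0$ and a real $x>0$, let $K_d(x)$ be the largest integer $k$ such that $(k-d)k\leqslant dx$; equivalently $K_d(x)=\lfloor (d+\sqrt{d^2+4dx})/2\rfloor$ (so $K_0(x)=0$). Then for integers $d$ and reals $x$ with $0\leqslant d\leqslant x$ and $x\geqslant 1$, $$K_{d+1}(x)-K_d(x)=\bigl(\sqrt{d+1}-\sqrt{d}\,\bigr)\sqrt{x}+O(1),$$ with an absolute implied constant.
   Context: $\lfloor t\rfloor$ denotes the integer part of the real number $t$. *)

From mathcomp Require Import all_boot all_order all_algebra.
From mathcomp Require Import reals.
Set Implicit Arguments. Unset Strict Implicit. Unset Printing Implicit Defensive.
Import Order.TTheory GRing.Theory Num.Theory.
Local Open Scope ring_scope.

Definition K (R : realType) (d : nat) (x : R) : int :=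
  Num.floor ((d%:R + Num.sqrt (d%:R ^+ 2 + 4 * d%:R * x)) / 2).

From mathcomp Require Import all_boot all_order all_algebra.
From mathcomp Require Import reals ring lra.
Set Implicit Arguments. Unset Strict Implicit. Unset Printing Implicit Defensive.
Import Order.TTheory GRing.Theory Num.Theory.
Local Open Scope ring_scope.

(* With s = sqrt d and u = sqrt x the discriminant root factors as
   sqrt (d^2 + 4 d x) = s sqrt (s^2 + 4 u^2) = 2 s u + defect u s, where
   defect u s = s^3 / (sqrt (s^2 + 4 u^2) + 2 u) is nonnegative and increasing
   in s.  Passing from s = sqrt d to t = sqrt (d + 1), the argument of the
   floor defining K grows by (t - s) u + 1/2 plus half the growth of the
   defect, which lies in [0, (t^3 - s^3) / (4 u)] and t^3 - s^3 <= t + s <= 4 u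
   because t^2 - s^2 = 1 and s <= u.  The two floors add an error below 1. *)

Section Defect.
Variables (R : rcfType) (u : R).

Definition defect (v : R) := v * (Num.sqrt (v ^+ 2 + 4 * u ^+ 2) - 2 * u).

Lemma defect_mulE (v : R) :
  defect v * (Num.sqrt (v ^+ 2 + 4 * u ^+ 2) + 2 * u) = v ^+ 3.
Proof.
have disc_ge0 : 0 <= v ^+ 2 + 4 * u ^+ 2 by nra.
rewrite /defect -mulrA -subr_sqr sqr_sqrtr //; ring.
Qed.

Let root_ge (v : R) : 0 <= u -> 2 * u <= Num.sqrt (v ^+ 2 + 4 * u ^+ 2).
Proof.
by move=> u0; rewrite -[X in X <= _]ger0_norm ?mulr_ge0 // -sqrtr_sqr ler_sqrt; nra.
Qed.

Let root_le_homo (v w : R) : 0 <= v <= w ->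
  Num.sqrt (v ^+ 2 + 4 * u ^+ 2) <= Num.sqrt (w ^+ 2 + 4 * u ^+ 2).
Proof. by move=> /andP[v0 vw]; rewrite ler_sqrt; nra. Qed.

Lemma defect_le_homo (v w : R) : 0 <= u -> 0 <= v <= w -> defect v <= defect w.
Proof.
move=> u0 /[dup] /andP[v0 vw] /root_le_homo vw_root.
by apply: ler_pM; rewrite ?subr_ge0 ?root_ge ?lerB.
Qed.

Lemma defectB_le (s t : R) : 0 < u -> 0 <= s <= t ->
  defect t - defect s <= (t ^+ 3 - s ^+ 3) / (4 * u).
Proof.
move=> u0 /[dup] /andP[s0 st] /root_le_homo.
have root_pos v : 0 < Num.sqrt (v ^+ 2 + 4 * u ^+ 2) + 2 * u :> R.
  by have := root_ge v (ltW u0); lra.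
have defectE v : defect v = v ^+ 3 / (Num.sqrt (v ^+ 2 + 4 * u ^+ 2) + 2 * u).
  by rewrite -(defect_mulE v) mulfK // gt_eqF.
rewrite !defectE.
have := root_ge s (ltW u0).
set a := Num.sqrt (s ^+ 2 + 4 * u ^+ 2); set b := Num.sqrt (t ^+ 2 + 4 * u ^+ 2).
move=> a_ge ab.
have s3_ge0 : 0 <= s ^+ 3 by rewrite exprn_ge0.
have s3t3 : s ^+ 3 <= t ^+ 3 by rewrite lerXn2r ?nnegrE //; lra.
apply: (@le_trans _ _ ((t ^+ 3 - s ^+ 3) / (a + 2 * u))).
  rewrite mulrBl lerD2r ler_wpM2l ?exprn_ge0 ?lef_pV2 ?posrE //; lra.
by rewrite ler_wpM2l ?subr_ge0 ?lef_pV2 ?posrE //; lra.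
Qed.

Lemma defect_step (s t : R) : 1 <= u -> 0 <= s <= u -> 0 <= t ->
  t ^+ 2 = s ^+ 2 + 1 -> 0 <= defect t - defect s <= 1.
Proof.
move=> u1 /andP[s0 su] t0 ts.
have st : s <= t by rewrite -(ler_pXn2r (_ : 0 < 2)%N) ?nnegrE // ts; lra.
rewrite subr_ge0 defect_le_homo ?s0 //=; last lra.
have u0 : 0 < u by lra.
apply: le_trans (defectB_le u0 (_ : 0 <= s <= t)) _; first by rewrite s0.
have cube_le : t ^+ 3 - s ^+ 3 <= t + s.
  have -> : t ^+ 3 - s ^+ 3 = (t + s) * (t ^+ 2 - s ^+ 2) - t * s * (t - s) by ring.
  by rewrite ts addrAC subrr add0r mulr1 lerBlDr lerDl !mulr_ge0 ?subr_ge0.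
have t_le : t <= 2 * u.
  have su2 : s ^+ 2 <= u ^+ 2 by rewrite ler_sqr ?nnegrE //; lra.
  rewrite -(ler_pXn2r (_ : 0 < 2)%N) ?nnegrE ?ts //; nra.
by rewrite ler_pdivrMr ?mul1r; nra.
Qed.

End Defect.

Lemma K_defectE (R : realType) (d : nat) (x : R) : 0 <= x ->
  K d x = Num.floor ((d%:R + defect (Num.sqrt x) (Num.sqrt d%:R)) / 2
                     + Num.sqrt d%:R * Num.sqrt x).
Proof.
move=> x0; rewrite /K /defect; congr Num.floor.
have -> : d%:R ^+ 2 + 4 * d%:R * x = d%:R * (d%:R + 4 * x) :> R by ring.
by rewrite !sqr_sqrtr ?sqrtrM ?ler0n //; field.
Qed.

Lemma floorB_approx (R : archiRealDomainType) (a b : R) :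
  `|(Num.floor a - Num.floor b)%:~R - (a - b)| < 1.
Proof.
have := floor_le a; have := floorD1_gt a.
have := floor_le b; have := floorD1_gt b.
rewrite intrB !intrD ltr_norml; lra.
Qed.

Theorem proposition2 (R : realType) :
  exists C : R, forall (d : nat) (x : R),
    d%:R <= x -> 1 <= x ->
    `| (K d.+1 x - K d x)%:~R
       - (Num.sqrt (d.+1)%:R - Num.sqrt d%:R) * Num.sqrt x | <= C.
Proof.
exists 2 => d x dx x1.
have x0 : 0 <= x by lra.
rewrite !K_defectE //.
set s := Num.sqrt d%:R; set t := Num.sqrt d.+1%:R; set u := Num.sqrt x.
have u1 : 1 <= u by rewrite -sqrtr1 ler_sqrt; lra.
have s_range : 0 <= s <= u by rewrite sqrtr_ge0 ler_sqrt.
have ts : t ^+ 2 = s ^+ 2 + 1 by rewrite !sqr_sqrtr ?ler0n // -natr1.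
have /andP[step_ge0 step_le1] :=
  defect_step u1 s_range (sqrtr_ge0 _) ts.
move: (floorB_approx
  ((d.+1%:R + defect u t) / 2 + t * u) ((d%:R + defect u s) / 2 + s * u)).
rewrite -natr1 !ltr_norml ler_norml; lra.
Qed.
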